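(* Let $D=(V,A)$ be a digraph, $k\in\mathbb{N}$, and $\mathcal{B}_i=(V_i,A_i)$ $(i<k)$ pairwise edge-disjoint branchings in $D$ such that for every nonempty $X\subseteq V$, $\varrho_{D\setminus\!\setminus\mathcal{B}}(X)\geq|\{i<k:V_i\cap X=\varnothing\}|$. Let $B\subseteq V$ be dangerous. Then for every $w\in B$ there is a path $R$ going from $V_0\cap B$ to $w$ in the subgraph $(D\setminus\!\setminus\mathcal{B})[B]$ spanned by $B$.
   Context: Digraphs may be of arbitrary cardinality with multiple edges. A branching is a digraph whose weakly connected components are arborescences (directed trees in which every vertex is reachable from the root). $D\setminus\!\setminus\mathcal{B}=(V,A\setminus\bigcup_{i<k}A_i)$. $\varrho_H(X)$ is the cardinality of the set of edges of $H$ with tail outside $X$ and head in $X$. A nonempty set $X\subseteq V$ is tight if $\varrho_{D\setminus\!\setminus\mathcal{B}}(X)=|\{i<k:V_i\cap X=\varnothing\}|$, and dangerous if it is tight and $X\cap V_0\neq\varnothing$. Paths are directed simple paths; a path $P$ goes from $X$ to $Y$ if $V(P)\cap X=\{\mathrm{start}(P)\}$ and $V(P)\cap Y=\{\mathrm{end}(P)\}$ (start and end may coincide). *)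

(* Digraphs of arbitrary cardinality with multiple edges:
   a vertex type V, an edge type A, and tail/head maps tl hd : A -> V.
   Subsets are predicates (V -> Prop), (A -> Prop). *)
From Stdlib Require Import List Arith ClassicalEpsilon.
Import ListNotations.
Set Implicit Arguments.

Section Digraph.
Variables (V A : Type) (tl hd : A -> V).

Fixpoint walk (H : A -> Prop) (x : V) (es : list A) (y : V) : Prop :=
  match es with
  | nil => x = y
  | e :: es' => H e /\ tl e = x /\ walk H (hd e) es' y
  end.

Definition walk_verts (x : V) (es : list A) : list V := x :: map hd es.

(* (Vi, Ai) is a branching in D: a subgraph whose weakly connected components
   are arborescences, i.e. every vertex has in-degree <= 1 and every vertex is
   reachable from a root (a vertex of in-degree 0) by a finite directed walk. *)
Definition is_branching (Vi : V -> Prop) (Ai : A -> Prop) : Prop :=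
  (forall e, Ai e -> Vi (tl e) /\ Vi (hd e)) /\
  (forall e1 e2, Ai e1 -> Ai e2 -> hd e1 = hd e2 -> e1 = e2) /\
  (forall v, Vi v -> exists r, Vi r /\ (forall e, Ai e -> hd e <> r) /\
                          exists es, walk Ai r es v).

(* edge set of D \\ B : edges of D in none of the A_i, i < k *)
Definition residual (k : nat) (As : nat -> A -> Prop) (e : A) : Prop :=
  forall i, i < k -> ~ As i e.

Definition enters (H : A -> Prop) (X : V -> Prop) (e : A) : Prop :=
  H e /\ ~ X (tl e) /\ X (hd e).

Definition rho_ge (H : A -> Prop) (X : V -> Prop) (n : nat) : Prop :=
  exists f : nat -> A,
    (forall i j, i < n -> j < n -> f i = f j -> i = j) /\
    (forall i, i < n -> enters H X (f i)).

Definition rho_eq (H : A -> Prop) (X : V -> Prop) (n : nat) : Prop :=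
  exists f : nat -> A,
    (forall i j, i < n -> j < n -> f i = f j -> i = j) /\
    (forall i, i < n -> enters H X (f i)) /\
    (forall e, enters H X e -> exists i, i < n /\ f i = e).

Definition missing (k : nat) (Vs : nat -> V -> Prop) (X : V -> Prop) : nat :=
  length (filter (fun i =>
    if excluded_middle_informative (forall v, Vs i v -> ~ X v) then true else false)
    (seq 0 k)).

Definition tight (k : nat) (Vs : nat -> V -> Prop) (As : nat -> A -> Prop)
  (X : V -> Prop) : Prop :=
  (exists v, X v) /\ rho_eq (residual k As) X (missing k Vs X).

Definition dangerous (k : nat) (Vs : nat -> V -> Prop) (As : nat -> A -> Prop)
  (X : V -> Prop) : Prop :=
  tight k Vs As X /\ exists v, X v /\ Vs 0 v.

Definition induced (H : A -> Prop) (B : V -> Prop) (e : A) : Prop :=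
  H e /\ B (tl e) /\ B (hd e).

Definition path_from_to (H : A -> Prop) (X Y : V -> Prop) (x : V) (es : list A)
  (y : V) : Prop :=
  walk H x es y /\ NoDup (walk_verts x es) /\
  (forall v, In v (walk_verts x es) -> X v -> v = x) /\
  (forall v, In v (walk_verts x es) -> Y v -> v = y) /\
  X x /\ Y y.

End Digraph.

(* Let Y be the set of vertices reachable from V_0 ∩ B in (D \\ B)[B].  If
   some w in B were missed, Z := B \ Y would be nonempty, and every residual
   edge entering Z would also enter B (an edge from Y into Z would extend Y).
   Hence ρ(Z) <= ρ(B) = missing(B).  But every branching missing B misses Z,
   and B_0 meets B but not Z, so missing(Z) > missing(B), contradicting the
   cut condition at Z.  A shortest walk from V_0 ∩ B to w is then the path. *)
From Stdlib Require Import List Arith Classical Lia ClassicalEpsilon.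
Import ListNotations.
Set Implicit Arguments.
Unset Strict Implicit.

Section Walks.
Variables (V A : Type) (tl hd : A -> V) (H : A -> Prop).

Definition reachable (X : V -> Prop) (v : V) : Prop :=
  exists x es, X x /\ walk tl hd H x es v.

Lemma walk_rcons x es e :
  walk tl hd H x es (tl e) -> H e -> walk tl hd H x (es ++ [e]) (hd e).
Proof.
  revert x; induction es as [|e' es IH]; simpl; intros x hw he.
  - subst x; auto.
  - destruct hw as [he' [htl hw]]; auto.
Qed.

Lemma walk_suffix x es y v :
  walk tl hd H x es y -> In v (map hd es) ->
  exists es', walk tl hd H v es' y /\ length es' < length es.
Proof.
  revert x; induction es as [|e es IH]; simpl; intros x hw hv; [contradiction|].
  destruct hw as [_ [_ hw]].
  destruct hv as [<-|hv].
  - exists es; auto.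
  - destruct (IH _ hw hv) as [es' [hw' hl]]. exists es'; split; [auto|lia].
Qed.

Lemma walk_shorten_dup x es y :
  walk tl hd H x es y -> ~ NoDup (walk_verts hd x es) ->
  exists es', walk tl hd H x es' y /\ length es' < length es.
Proof.
  revert x; induction es as [|e es IH]; intros x hw hdup.
  - exfalso; apply hdup; repeat constructor; auto.
  - destruct (classic (In x (map hd (e :: es)))) as [hx|hx].
    + exact (walk_suffix hw hx).
    + destruct hw as [he [htl hw]].
      assert (hdup' : ~ NoDup (walk_verts hd (hd e) es)).
      { intros hnd; apply hdup; constructor; auto. }
      destruct (IH _ hw hdup') as [es' [hw' hl]].
      exists (e :: es'); simpl; split; [auto|lia].
Qed.

(* A shortest walk from X to y can neither revisit a vertex nor re-enter X. *)
Lemma reachable_path (X : V -> Prop) y :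
  reachable X y ->
  exists x es, path_from_to tl hd H X (fun v => v = y) x es y.
Proof.
  intros [x [es [hX hw]]].
  remember (length es) as n eqn:hn.
  revert x es hX hw hn; induction n as [n IH] using lt_wf_ind; intros x es hX hw hn.
  destruct (classic (exists v, In v (map hd es) /\ X v)) as [[v [hv hXv]]|hnX].
  { destruct (walk_suffix hw hv) as [es' [hw' hl]]. eapply (IH (length es')); eauto; lia. }
  destruct (classic (NoDup (walk_verts hd x es))) as [hnd|hdup].
  - exists x, es; repeat split; auto.
    intros v [<-|hv] hXv; [reflexivity|]. exfalso; eauto.
  - destruct (walk_shorten_dup hw hdup) as [es' [hw' hl]].
    eapply (IH (length es')); eauto; lia.
Qed.

End Walks.

Section Cuts.
Variables (V A : Type) (tl hd : A -> V).

Lemma rho_ge_le_rho_eq (H : A -> Prop) (X Z : V -> Prop) m n :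
  (forall e, enters tl hd H Z e -> enters tl hd H X e) ->
  rho_ge tl hd H Z m -> rho_eq tl hd H X n -> m <= n.
Proof.
  intros hsub [g [ginj gent]] [f [_ [_ fall]]].
  assert (hincl : length (map g (seq 0 m)) <= length (map f (seq 0 n))).
  { apply NoDup_incl_length.
    - apply NoDup_map_NoDup_ForallPairs; [|apply seq_NoDup].
      intros a b ha hb. apply in_seq in ha, hb. apply ginj; lia.
    - intros e he. apply in_map_iff in he. destruct he as [i [<- hi]].
      apply in_seq in hi.
      destruct (fall (g i)) as [j [hj <-]]; [apply hsub, gent; lia|].
      apply in_map. apply in_seq; lia. }
  now rewrite !length_map, !length_seq in hincl.
Qed.

Lemma filter_length_le (T : Type) (l : list T) (p q : T -> bool) :
  (forall i, p i = true -> q i = true) ->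
  length (filter p l) <= length (filter q l).
Proof.
  intros hpq; induction l as [|a l IH]; simpl; auto.
  destruct (p a) eqn:hp.
  - rewrite (hpq a hp); simpl; lia.
  - destruct (q a); simpl; lia.
Qed.

Lemma missing_lt (k : nat) (Vs : nat -> V -> Prop) (X Z : V -> Prop) :
  0 < k -> (forall v, Z v -> X v) ->
  (exists v, X v /\ Vs 0 v) -> (forall v, Vs 0 v -> ~ Z v) ->
  missing k Vs X < missing k Vs Z.
Proof.
  intros hk hZX [v0 [hXv0 hv0]] hZ0.
  destruct k as [|k]; [lia|]. unfold missing; simpl.
  destruct (excluded_middle_informative (forall v, Vs 0 v -> ~ X v)) as [c|_].
  { exfalso; exact (c v0 hv0 hXv0). }
  destruct (excluded_middle_informative (forall v, Vs 0 v -> ~ Z v)) as [_|c];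
    [|contradiction].
  simpl; apply le_n_S, filter_length_le. intros i.
  destruct (excluded_middle_informative (forall v, Vs i v -> ~ X v)) as [d|_];
    [|discriminate].
  destruct (excluded_middle_informative (forall v, Vs i v -> ~ Z v)) as [_|d'];
    [reflexivity|].
  exfalso; apply d'; intros v hv hZv; exact (d v hv (hZX v hZv)).
Qed.

Lemma enters_unreachable (R : A -> Prop) (B S : V -> Prop) e :
  enters tl hd R (fun v => B v /\ ~ reachable tl hd (induced tl hd R B) S v) e ->
  enters tl hd R B e.
Proof.
  intros [hR [htl [hB hunr]]]. repeat split; auto.
  intros hBt. apply hunr.
  assert (reachable tl hd (induced tl hd R B) S (tl e)) as [x [es [hS hw]]]
    by (apply NNPP; intro; apply htl; auto).
  exists x, (es ++ [e]); split; auto. apply walk_rcons; auto. repeat split; auto.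
Qed.

Lemma dangerous_reachable k Vs As (B : V -> Prop) :
  0 < k ->
  (forall X : V -> Prop, (exists v, X v) ->
     rho_ge tl hd (residual k As) X (missing k Vs X)) ->
  dangerous tl hd k Vs As B ->
  forall w, B w ->
    reachable tl hd (induced tl hd (residual k As) B) (fun v => Vs 0 v /\ B v) w.
Proof.
  intros hk hcut [[_ htight] hB0] w hw.
  set (S := fun v => Vs 0 v /\ B v).
  set (Z := fun v => B v /\ ~ reachable tl hd (induced tl hd (residual k As) B) S v).
  apply NNPP; intros hw'.
  assert (hle : missing k Vs Z <= missing k Vs B).
  { eapply rho_ge_le_rho_eq; [|apply hcut; exists w; split; auto|exact htight].
    apply enters_unreachable. }
  assert (hlt : missing k Vs B < missing k Vs Z).
  { apply missing_lt; auto.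
    - intros v [hv _]; exact hv.
    - intros v hv [hBv hunr]. apply hunr. exists v, []; repeat split; auto. }
  lia.
Qed.

End Cuts.

Theorem proposition2 (V A : Type) (tl hd : A -> V) (k : nat)
  (Vs : nat -> V -> Prop) (As : nat -> A -> Prop)
  (hk : 0 < k)
  (Hbr : forall i, i < k -> is_branching tl hd (Vs i) (As i))
  (Hdisj : forall i j e, i < k -> j < k -> i <> j -> As i e -> As j e -> False)
  (Hcut : forall X : V -> Prop, (exists v, X v) ->
            rho_ge tl hd (residual k As) X (missing k Vs X))
  (B : V -> Prop) (HB : dangerous tl hd k Vs As B) :
  forall w, B w ->
    exists x es, path_from_to tl hd (induced tl hd (residual k As) B)
                   (fun v => Vs 0 v /\ B v) (fun v => v = w) x es w.
Proof.
  intros w hw.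
  apply reachable_path.
  exact (dangerous_reachable hk Hcut HB hw).
Qed.
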